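(* Let $A\in\mathcal{C}_n$ and let $u,v$ be minimal zeros of $A$ with supports $\operatorname{Supp}(u)=I$, $\operatorname{Supp}(v)=J$. Assume that $J\setminus I=\{k\}$ consists of exactly one element. Then every zero $w$ of $A$ with $\operatorname{Supp}(w)\subset I\cup J$ can be written as $w=\alpha u+\beta v$ with $\alpha,\beta\ge 0$. In particular, up to multiplication by a positive constant, $A$ has no minimal zeros $w$ with $\operatorname{Supp}(w)\subset I\cup J$ other than $u$ and $v$.
   Context: $\mathcal{C}_n$ denotes the cone of copositive matrices: real symmetric $n\times n$ matrices $A$ with $x^TAx\ge 0$ for all $x\in\mathbb{R}^n_+$. For $A\in\mathcal{C}_n$, a zero of $A$ is a nonzero vector $u\in\mathbb{R}^n_+$ with $u^TAu=0$. The support of $u\in\mathbb{R}^n$ is $\operatorname{Supp}(u)=\{i : u_i\neq 0\}$. A zero $u$ of $A$ is minimal if there is no zero $v$ of $A$ with $\operatorname{Supp}(v)\subsetneq\operatorname{Supp}(u)$. *)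

(* copositive matrices over an arbitrary real field R
   (the reals are an instance; the statement is purely order-algebraic). *)
From HB Require Import structures.
From mathcomp Require Import all_boot all_order all_algebra.
Set Implicit Arguments. Unset Strict Implicit. Unset Printing Implicit Defensive.
Import Order.TTheory GRing.Theory Num.Theory.
Local Open Scope ring_scope.

Definition qform {R : realFieldType} {n : nat} (A : 'M[R]_n) (x : 'cV[R]_n) : R :=
  (x^T *m A *m x) 0 0.

Definition nonneg_vec {R : realFieldType} {n : nat} (x : 'cV[R]_n) : Prop :=
  forall i, 0 <= x i 0.

Definition copositive {R : realFieldType} {n : nat} (A : 'M[R]_n) : Prop :=
  A^T = A /\ forall x : 'cV[R]_n, nonneg_vec x -> 0 <= qform A x.

Definition supp {R : realFieldType} {n : nat} (x : 'cV[R]_n) : {set 'I_n} :=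
  [set i | x i 0 != 0].

Definition is_zero_of {R : realFieldType} {n : nat} (A : 'M[R]_n) (u : 'cV[R]_n) : Prop :=
  nonneg_vec u /\ u <> 0 /\ qform A u = 0.

Definition minimal_zero {R : realFieldType} {n : nat} (A : 'M[R]_n) (u : 'cV[R]_n) : Prop :=
  is_zero_of A u /\
  forall v : 'cV[R]_n, is_zero_of A v -> ~ (supp v \proper supp u).

From HB Require Import structures.
From mathcomp Require Import all_boot all_order all_algebra.
From mathcomp Require Import ring lra.
Set Implicit Arguments. Unset Strict Implicit. Unset Printing Implicit Defensive.
Import Order.TTheory GRing.Theory Num.Theory.
Local Open Scope ring_scope.

(* The argument rests on three general facts about a zero u of A:
   - first-order optimality: (A u)_i = 0 for every i in supp u, so the
     bilinear form B(u, x) = u^T A x vanishes whenever supp x <= supp u;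
   - if u is moreover minimal, every x with supp x <= supp u and
     x^T A x <= 0 is a multiple of u (move from u along x until the first
     coordinate vanishes; the resulting zero has too small a support);
   - for nonnegative x, y and positive a, b, supp (a x + b y) = supp x u supp y.
   For the theorem, put s = w_k / v_k and x = w - s v: then supp x <= I and
   x^T A x = -2 s B(w, v) <= 0, hence w = c u + s v; minimality of v forces
   c >= 0, and minimality of w rules out c, s > 0 simultaneously. *)

Definition bilin {R : realFieldType} {n : nat} (A : 'M[R]_n) (x y : 'cV[R]_n) : R :=
  (x^T *m A *m y) 0 0.

Section Supports.
Variables (R : realFieldType) (n : nat).
Implicit Types (x y : 'cV[R]_n) (a b : R).

Lemma subset_suppP x y :
  reflect (forall i, y i 0 = 0 -> x i 0 = 0) (supp x \subset supp y).
Proof.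
apply: (iffP subsetP) => [sub i yi0 | H i].
  by apply/eqP/negPn/negP => /negbTE xi; move: (sub i); rewrite !inE xi yi0 eqxx => /(_ isT).
by rewrite !inE; apply: contra => /eqP /H ->.
Qed.

Lemma supp_scale_sub a x : supp (a *: x) \subset supp x.
Proof. by apply/subset_suppP => i xi0; rewrite mxE xi0 mulr0. Qed.

(* Positive combinations of nonnegative vectors have no cancellation. *)
Lemma supp_pos_comb a b x y : nonneg_vec x -> nonneg_vec y -> 0 < a -> 0 < b ->
  supp (a *: x + b *: y) = supp x :|: supp y.
Proof.
move=> nx ny a0 b0; apply/setP => i; rewrite !inE !mxE.
have ax := mulr_ge0 (ltW a0) (nx i); have by_ := mulr_ge0 (ltW b0) (ny i).
by rewrite paddr_eq0 // !mulf_eq0 (gt_eqF a0) (gt_eqF b0) /= negb_and.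
Qed.

End Supports.

Section CopositiveZeros.
Variables (R : realFieldType) (n : nat) (A : 'M[R]_n).
Implicit Types (x y : 'cV[R]_n) (a b : R).

Lemma bilinC x y : A^T = A -> bilin A x y = bilin A y x.
Proof.
move=> sA; rewrite /bilin; transitivity ((y^T *m A *m x)^T 0 0); last by rewrite mxE.
by rewrite !trmx_mul trmxK sA mulmxA.
Qed.

Lemma qform_comb a b x y : A^T = A -> qform A (a *: x + b *: y) =
  a ^+ 2 * qform A x + 2 * a * b * bilin A x y + b ^+ 2 * qform A y.
Proof.
move=> sA; rewrite /qform !(linearD, linearZ) /= !(mulmxDl, mulmxDr).
rewrite -!(scalemxAl, scalemxAr).
have := bilinC y x sA; rewrite /bilin /qform.
set Qx := x^T *m A *m x; set Qy := y^T *m A *m y.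
set Bxy := x^T *m A *m y; set Byx := y^T *m A *m x.
by clearbody Qx Qy Bxy Byx; rewrite !mxE => ->; ring.
Qed.

Lemma bilin_col x y : bilin A x y = \sum_i x i 0 * (A *m y) i 0.
Proof. by rewrite /bilin -mulmxA mxE; apply: eq_bigr => i _; rewrite mxE. Qed.

Lemma qform_delta i : qform A (delta_mx i 0) = A i i.
Proof. by rewrite /qform trmx_delta -rowE -colE !mxE. Qed.

Lemma bilin_delta i y : bilin A (delta_mx i 0) y = (A *m y) i 0.
Proof. by rewrite /bilin trmx_delta -mulmxA -rowE mxE. Qed.

(* Two zeros of a copositive matrix pair nonnegatively: q(x + y) = 2 B(x, y). *)
Lemma bilin_zeros_ge0 x y :
  copositive A -> is_zero_of A x -> is_zero_of A y -> 0 <= bilin A x y.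
Proof.
move=> [sA cop] [nx [_ qx]] [ny [_ qy]].
have nxy : nonneg_vec (1 *: x + 1 *: y) by move=> i; rewrite !mxE !mul1r addr_ge0.
by have := cop _ nxy; rewrite qform_comb // qx qy; lra.
Qed.

End CopositiveZeros.

Lemma quadratic_ge0_slope (R : realFieldType) (b c d : R) : 0 < d ->
  (forall t, 0 < t -> t <= d -> 0 <= b * t + c * t ^+ 2) -> 0 <= b.
Proof.
move=> d0 H; rewrite leNgt; apply/negP => b_neg.
set m := `|c| + 1; have m0 : 0 < m by rewrite /m ltr_wpDl.
set r := - b / m; have r0 : 0 < r by rewrite /r divr_gt0 // oppr_gt0.
set t := Order.min d r.
have t0 : 0 < t by rewrite lt_min d0 r0.
have td : t <= d by rewrite ge_min lexx.
have tr : t <= r by rewrite ge_min lexx orbT.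
have ct_lt : c * t < - b.
  have mr : m * r = - b by rewrite /r mulrC mulfVK // gt_eqF.
  have c_le : c * t <= `|c| * r.
    apply: (le_trans (ler_wpM2r (ltW t0) (ler_norm c))).
    by rewrite ler_wpM2l // normr_ge0.
  by rewrite -mr; apply: (le_lt_trans c_le); rewrite ltr_pM2r // ltrDl.
have := H t t0 td; nra.
Qed.

Section ZeroStructure.
Variables (R : realFieldType) (n : nat) (A : 'M[R]_n).
Hypothesis copA : copositive A.
Implicit Types (u x y : 'cV[R]_n).

Let symA : A^T = A. Proof. by case: copA. Qed.

(* First-order optimality: a zero u minimises q on R^n_+, so the gradient
   A u vanishes on the support of u (moving u_i in both directions). *)
Lemma zero_gradient u i : is_zero_of A u -> u i 0 != 0 -> (A *m u) i 0 = 0.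
Proof.
move=> [nu [_ qu]] ui_neq0.
have ui0 : 0 < u i 0 by rewrite lt_def ui_neq0 nu.
set g := (A *m u) i 0.
have along t : -u i 0 <= t -> 0 <= 2 * t * g + t ^+ 2 * A i i.
  move=> tu; have nonneg : nonneg_vec (1 *: u + t *: delta_mx i 0).
    move=> j; rewrite !mxE mul1r; case: (eqVneq j i) => [->|ji] /=.
      by rewrite mulr1; lra.
    by rewrite mulr0 addr0.
  have := proj2 copA _ nonneg.
  by rewrite qform_comb // qform_delta qu (bilinC _ _ symA) bilin_delta -/g; lra.
have up : 0 <= 2 * g.
  apply: (quadratic_ge0_slope (c := A i i) ui0) => t t0 _.
  by have := along t; lra.
have down : 0 <= - (2 * g).
  apply: (quadratic_ge0_slope (c := A i i) ui0) => t t0 tu.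
  by have := along (- t); rewrite sqrrN; lra.
lra.
Qed.

Lemma bilin_zero_supp u x :
  is_zero_of A u -> supp x \subset supp u -> bilin A u x = 0.
Proof.
move=> zu /subset_suppP sx; rewrite bilinC // bilin_col; apply: big1 => i _.
have [/sx -> | ui] := eqVneq (u i 0) 0; first by rewrite mul0r.
by rewrite zero_gradient // mulr0.
Qed.

Lemma minimal_zero_supp u y :
  minimal_zero A u -> is_zero_of A y -> supp y \subset supp u -> supp y = supp u.
Proof.
move=> [_ mu] zy syu; apply/eqP; rewrite eqEproper syu /=.
by apply/negP; exact: mu zy.
Qed.

(* Key step, for x with a negative coordinate: walk from u along x up to the
   first coordinate j reaching 0; the endpoint y = u + t x is nonnegative with
   q(y) = t^2 q(x) <= 0, hence a zero or 0, and y_j = 0 forces y = 0. *)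
Lemma minimal_zero_multiple_neg u x j0 :
  minimal_zero A u -> supp x \subset supp u -> qform A x <= 0 -> x j0 0 < 0 ->
  exists c, x = c *: u.
Proof.
move=> mu sxu qx xj0.
have [zu _] := mu; have [nu [_ qu]] := zu.
have [j xj jmin] := @arg_minP _ R _ j0 (fun i => x i 0 < 0)
  (fun i => u i 0 / - x i 0) xj0.
have uj : u j 0 != 0 by apply: contraTneq xj => /(subset_suppP _ _ sxu) ->; rewrite ltxx.
have uj0 : 0 < u j 0 by rewrite lt_def uj nu.
have nxj : 0 < - x j 0 by rewrite oppr_gt0.
set t := u j 0 / - x j 0; have t0 : 0 < t by rewrite divr_gt0.
set y := 1 *: u + t *: x.
have ye i : y i 0 = u i 0 + t * x i 0 by rewrite !mxE mul1r.
have ny : nonneg_vec y.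
  move=> i; rewrite ye; have [xi|xi] := ltP (x i 0) 0.
    have := jmin i xi; rewrite ler_pdivlMr ?oppr_gt0 // -/t; lra.
  by rewrite addr_ge0 // mulr_ge0 // ltW.
have qy : qform A y = 0.
  apply/eqP; rewrite eq_le (proj2 copA _ ny) andbT.
  rewrite qform_comb // qu bilin_zero_supp //.
  by have := ler_wpM2l (sqr_ge0 t) qx; rewrite mulr0; lra.
have yj : y j 0 = 0 by rewrite ye /t; field; rewrite ltr0_neq0.
have y0 : y = 0.
  apply/eqP/negPn/negP => /eqP y_neq0.
  have syu : supp y \subset supp u.
    by apply/subset_suppP => i ui; rewrite ye ui (subset_suppP _ _ sxu i ui) mulr0 addr0.
  have := minimal_zero_supp mu (conj ny (conj y_neq0 qy)) syu.
  by move/setP/(_ j); rewrite !inE yj eqxx uj.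
exists (- t^-1); apply/matrixP => i l; rewrite (ord1 l) mxE.
have := congr1 (fun M : 'cV[R]_n => M i 0) y0; rewrite /= ye mxE => e.
have -> : x i 0 = (u i 0 + t * x i 0 - u i 0) / t by field; rewrite gt_eqF.
by rewrite e; field; rewrite gt_eqF.
Qed.

Lemma minimal_zero_multiple u x :
  minimal_zero A u -> supp x \subset supp u -> qform A x <= 0 ->
  exists c, x = c *: u.
Proof.
move=> mu sxu qx.
have [j xj | x_ge0] := pickP (fun i => x i 0 < 0).
  exact: minimal_zero_multiple_neg mu sxu qx xj.
have [j xj | x_le0] := pickP (fun i => 0 < x i 0); last first.
  exists 0; apply/matrixP => i l; rewrite (ord1 l) scale0r mxE.
  by apply/eqP; rewrite eq_le !leNgt x_ge0 x_le0.
have sxu' : supp ((-1) *: x) \subset supp u := subset_trans (supp_scale_sub _ _) sxu.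
have qx' : qform A ((-1) *: x) <= 0.
  by have := qform_comb (-1) 0 x x symA; rewrite scale0r addr0 => ->; lra.
have [|c xc] := minimal_zero_multiple_neg mu sxu' qx' (j0 := j).
  by rewrite mxE mulN1r oppr_lt0.
by exists (- c); rewrite scaleNr -xc scaleN1r opprK.
Qed.

End ZeroStructure.

Section TwoMinimalZeros.
Variables (R : realFieldType) (n : nat) (A : 'M[R]_n) (u v : 'cV[R]_n) (k : 'I_n).
Hypotheses (copA : copositive A) (mu : minimal_zero A u) (mv : minimal_zero A v).
Hypothesis supp_diff : supp v :\: supp u = [set k].
Implicit Types (w x : 'cV[R]_n).

Let nonneg_u : nonneg_vec u. Proof. by case: mu => [[]]. Qed.
Let nonneg_v : nonneg_vec v. Proof. by case: mv => [[]]. Qed.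

Lemma k_in_v_not_u : u k 0 = 0 /\ 0 < v k 0.
Proof.
have : k \in supp v :\: supp u by rewrite supp_diff set11.
rewrite !inE negbK => /andP [/eqP uk vk].
by split => //; rewrite lt_def vk nonneg_v.
Qed.

Lemma v_outside_u i : u i 0 = 0 -> i != k -> v i 0 = 0.
Proof.
move=> ui ik; apply/eqP/negPn/negP => vi.
have : i \in supp v :\: supp u by rewrite !inE vi ui eqxx.
by rewrite supp_diff inE (negbTE ik).
Qed.

Lemma supp_proper_u x : supp u \subset supp x -> x k 0 != 0 -> supp u \proper supp x.
Proof.
move=> sux xk; apply/properP; split => //; exists k; first by rewrite inE.
by rewrite inE (proj1 k_in_v_not_u) eqxx.
Qed.

(* First assertion: w = c u + s v with s = w_k / v_k, since w - s v lives in
   supp u and has nonpositive quadratic form; c < 0 would embed supp u in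
   supp v, contradicting minimality of v. *)
Lemma zero_decomposition w : is_zero_of A w -> supp w \subset supp u :|: supp v ->
  exists alpha beta : R, [/\ 0 <= alpha, 0 <= beta & w = alpha *: u + beta *: v].
Proof.
move=> zw sw; have [nw [_ qw]] := zw.
have [uk vk0] := k_in_v_not_u.
set s := w k 0 / v k 0; have s0 : 0 <= s by rewrite divr_ge0 // ltW.
set x := 1 *: w + (- s) *: v.
have sxu : supp x \subset supp u.
  apply/subset_suppP => i ui; rewrite !mxE mul1r mulNr.
  have [-> | ik] := eqVneq i k; first by rewrite /s mulfVK ?subrr // gt_eqF.
  have wi : w i 0 = 0.
    apply/eqP/negPn/negP => wi; move/subsetP: sw => /(_ i); rewrite !inE wi ui.
    by rewrite v_outside_u // eqxx => /(_ isT).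
  by rewrite wi v_outside_u // mulr0 subrr.
have qx : qform A x <= 0.
  rewrite qform_comb ?(proj1 copA) // qw (proj2 (proj2 (proj1 mv))).
  by have := mulr_ge0 s0 (bilin_zeros_ge0 copA zw (proj1 mv)); lra.
have [c xc] := minimal_zero_multiple copA mu sxu qx.
have we : w = c *: u + s *: v.
  by rewrite -xc /x scale1r scaleNr addrNK.
exists c, s; split => //; rewrite leNgt; apply/negP => c_neg.
have sv : s *: v = 1 *: w + (- c) *: u by rewrite we scaleNr scale1r addrAC subrr add0r.
have suv : supp u \subset supp v.
  apply: subset_trans (supp_scale_sub s v); rewrite sv.
  by rewrite (supp_pos_comb nw nonneg_u) ?ltr01 ?oppr_gt0 // subsetUr.
apply: (proj2 mv u (proj1 mu)); apply: supp_proper_u => //.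
by rewrite gt_eqF.
Qed.

(* A minimal zero in supp u u supp v must be a positive multiple of u or v:
   with both coefficients positive its support would strictly contain supp u. *)
Lemma minimal_zero_classification w :
  minimal_zero A w -> supp w \subset supp u :|: supp v ->
  exists c : R, 0 < c /\ (w = c *: u \/ w = c *: v).
Proof.
move=> mw sw; have [_ [w0 _]] := proj1 mw.
have [alpha [beta [a0 b0 we]]] := zero_decomposition (proj1 mw) sw.
have [a_eq0 | a_neq0] := eqVneq alpha 0.
  exists beta; split; last by right; rewrite we a_eq0 scale0r add0r.
  rewrite lt_def b0 andbT; apply/eqP => b_eq0; apply: w0.
  by rewrite we a_eq0 b_eq0 !scale0r addr0.
have [b_eq0 | b_neq0] := eqVneq beta 0.
  exists alpha; split; last by left; rewrite we b_eq0 scale0r addr0.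
  by rewrite lt_def a_neq0.
have a_pos : 0 < alpha by rewrite lt_def a_neq0.
have b_pos : 0 < beta by rewrite lt_def b_neq0.
have sw_eq : supp w = supp u :|: supp v.
  by rewrite we (supp_pos_comb nonneg_u nonneg_v).
have wk : k \in supp w by rewrite sw_eq !inE (gt_eqF (proj2 k_in_v_not_u)) orbT.
exfalso; apply: (proj2 mw u (proj1 mu)); apply: supp_proper_u.
  by rewrite sw_eq subsetUl.
by rewrite inE in wk.
Qed.

End TwoMinimalZeros.

Theorem corollary3p13 (R : realFieldType) (n : nat) (A : 'M[R]_n)
    (u v : 'cV[R]_n) (k : 'I_n) :
  copositive A -> minimal_zero A u -> minimal_zero A v ->
  supp v :\: supp u = [set k] ->
  (forall w : 'cV[R]_n, is_zero_of A w -> supp w \subset supp u :|: supp v ->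
     exists alpha beta : R, [/\ 0 <= alpha, 0 <= beta & w = alpha *: u + beta *: v])
  /\
  (forall w : 'cV[R]_n, minimal_zero A w -> supp w \subset supp u :|: supp v ->
     exists c : R, 0 < c /\ (w = c *: u \/ w = c *: v)).
Proof.
move=> copA mu mv supp_diff; split.
  exact: zero_decomposition copA mu mv supp_diff.
exact: minimal_zero_classification copA mu mv supp_diff.
Qed.
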